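(* Let $B\ge1$, $\mathcal{E}>0$, $0<\epsilon\le1$. Run the alternate convex search algorithm described in the context with starting point $\mathbf{i}^{(0)}=(2,\dots,2)$. If $t_b^{(1)}\neq0$ for all $b\in\{0,\dots,B-1\}$, then $\lim_{k\to\infty}(\mathbf{i}^{(k)},\mathbf{t}^{(k)})=(\mathbf{i}^{(0)},\mathbf{t}^{(1)})$.
   Context: Alternate convex search (ACS): given $\mathbf{i}^{(0)}$ with $i^{(0)}_b\ge1+\epsilon$, for $k=0,1,2,\dots$: (1) with $\mathbf{i}^{(k)}$ fixed, let $\mathbf{t}^{(k+1)}$ be an optimal solution of: minimize over $\mathbf{t}\in\mathbb{R}^B$ the quantity $\sum_{b=0}^{B-1}4^b\exp(-2(i_b^{(k)}-1)t_b)$ subject to $\sum_b(i_b^{(k)})^2t_b\le\mathcal{E}$, $t_b\ge0$; (2) with $\mathbf{t}^{(k+1)}$ fixed, let $\mathbf{i}^{(k+1)}$ be an optimal solution of: minimize over $\mathbf{i}\in\mathbb{R}^B$ the quantity $\sum_b4^b\exp(-2(i_b-1)t_b^{(k+1)})$ subject to $\sum_bi_b^2t_b^{(k+1)}\le\mathcal{E}$, $i_b\ge1+\epsilon$. *)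

From HB Require Import structures.
From mathcomp Require Import all_boot all_order all_algebra.
From mathcomp Require Import all_classical all_reals all_analysis.
Set Implicit Arguments. Unset Strict Implicit. Unset Printing Implicit Defensive.
Import Order.TTheory GRing.Theory Num.Theory.
Import numFieldNormedType.Exports.
Local Open Scope ring_scope.

Section ACS.
Variables (R : realType) (B : nat).

Definition acs_obj (i t : 'I_B -> R) : R :=
  \sum_(b < B) (4 : R) ^+ b * expR (- 2 * (i b - 1) * t b).

Definition acs_energy (i t : 'I_B -> R) : R :=
  \sum_(b < B) (i b) ^+ 2 * t b.

Definition feasible_t (E : R) (i t : 'I_B -> R) : Prop :=
  acs_energy i t <= E /\ forall b : 'I_B, 0 <= t b.

Definition feasible_i (E eps : R) (t i : 'I_B -> R) : Prop :=
  acs_energy i t <= E /\ forall b : 'I_B, 1 + eps <= i b.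

Definition optimal_t (E : R) (i t : 'I_B -> R) : Prop :=
  feasible_t E i t /\
  forall t' : 'I_B -> R, feasible_t E i t' -> acs_obj i t <= acs_obj i t'.

Definition optimal_i (E eps : R) (t i : 'I_B -> R) : Prop :=
  feasible_i E eps t i /\
  forall i' : 'I_B -> R, feasible_i E eps t i' -> acs_obj i t <= acs_obj i' t.

(* (ii, tt) is a run of ACS: tt (k+1) optimal for ii k, ii (k+1) optimal for tt (k+1).
   tt 0 is unused (t^(0) is not defined by the algorithm). *)
Definition acs_run (E eps : R) (ii tt : nat -> 'I_B -> R) : Prop :=
  forall k : nat, optimal_t E (ii k) (tt k.+1) /\ optimal_i E eps (tt k.+1) (ii k.+1).

End ACS.

From HB Require Import structures.
From mathcomp Require Import all_boot all_order all_algebra.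
From mathcomp Require Import all_classical all_reals all_analysis.
From mathcomp Require Import ring lra.
Import Order.TTheory GRing.Theory Num.Theory.
Import numFieldNormedType.Exports.
Local Open Scope classical_set_scope.
Local Open Scope ring_scope.

(* Both ACS steps minimise a strictly convex function over a convex set: the
   objective is a positive combination of exponentials of (i_b - 1) t_b, which is
   linear in t and affine in i, and midpoints of feasible points stay feasible
   (in i because t >= 0).  Hence each step has a unique solution as soon as
   i_b <> 1, resp. t_b <> 0.  Since i = (2,...,2) is itself optimal for t^(1),
   uniqueness makes the run stationary: i^(k) = i^(0) and t^(k+1) = t^(1). *)

Lemma leif_cond_of_ge {R : numDomainType} {x y : R} {C : bool} :
  x <= y ?= iff C -> y <= x -> C.
Proof. by case=> le_xy <- le_yx; rewrite eq_le le_xy le_yx. Qed.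

Section ExpMidpoint.
Context {R : realType}.

Lemma expR_midpoint_leif (u v : R) :
  expR ((u + v) / 2) *+ 2 <= expR u + expR v ?= iff (u == v).
Proof.
have sqr_expR_half (x : R) : expR (x / 2) ^+ 2 = expR x.
  by rewrite -expRM_natr -mulrA mulVf ?mulr1 ?pnatr_eq0.
have -> : u == v = (expR (u / 2) == expR (v / 2)).
  by rewrite (inj_eq (@expR_inj R)) (inj_eq (mulIf _)) ?invr_eq0 ?pnatr_eq0.
rewrite mulrDl expRD -[expR u]sqr_expR_half -[expR v]sqr_expR_half.
exact: leif_mean_square_scaled.
Qed.

Lemma sum_expR_midpoint_leif (I : finType) (a u v : I -> R) :
  (forall k, 0 < a k) ->
  (\sum_k a k * expR ((u k + v k) / 2)) *+ 2 <=
    \sum_k a k * expR (u k) + \sum_k a k * expR (v k) ?= iff [forall k, u k == v k].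
Proof.
move=> a_gt0; rewrite -sumrMnl -big_split /=; apply: leif_sum => k _.
rewrite -mulrDr -mulrnAr (mono_leif (ler_pM2l (a_gt0 k))); apply: expR_midpoint_leif.
Qed.

End ExpMidpoint.

Section AlternateConvexSearch.
Context {R : realType} {B : nat}.
Implicit Types (E eps : R) (i t : 'I_B -> R).

Definition midpoint (x y : 'I_B -> R) : 'I_B -> R := fun b => (x b + y b) / 2.

Lemma acs_obj_midpoint_leif {i1 t1 i2 t2 im tm : 'I_B -> R} :
  (forall b, (im b - 1) * tm b = ((i1 b - 1) * t1 b + (i2 b - 1) * t2 b) / 2) ->
  acs_obj im tm *+ 2 <= acs_obj i1 t1 + acs_obj i2 t2
    ?= iff [forall b, (i1 b - 1) * t1 b == (i2 b - 1) * t2 b].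
Proof.
move=> mid_prod.
have -> : acs_obj im tm = \sum_(b < B) 4 ^+ b *
    expR ((- 2 * (i1 b - 1) * t1 b + - 2 * (i2 b - 1) * t2 b) / 2).
  by apply: eq_bigr => b _; rewrite -mulrA mid_prod; congr (_ * expR _); field.
have -> : [forall b, (i1 b - 1) * t1 b == (i2 b - 1) * t2 b] =
    [forall b, - 2 * (i1 b - 1) * t1 b == - 2 * (i2 b - 1) * t2 b].
  by apply: eq_forallb => b; rewrite -!mulrA (inj_eq (mulfI _)) // oppr_eq0 pnatr_eq0.
by apply: sum_expR_midpoint_leif => b; rewrite exprn_gt0.
Qed.

Lemma feasible_t_midpoint {E i t1 t2} :
  feasible_t E i t1 -> feasible_t E i t2 -> feasible_t E i (midpoint t1 t2).
Proof.
move=> [en1 ge0_1] [en2 ge0_2]; split=> [|b]; last first.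
  by rewrite divr_ge0 ?addr_ge0.
have -> : acs_energy i (midpoint t1 t2) = (acs_energy i t1 + acs_energy i t2) / 2.
  rewrite /acs_energy -big_split /= mulr_suml.
  by apply: eq_bigr => b _; rewrite /midpoint; field.
lra.
Qed.

Lemma feasible_i_midpoint {E eps t i1 i2} : (forall b, 0 <= t b) ->
  feasible_i E eps t i1 -> feasible_i E eps t i2 -> feasible_i E eps t (midpoint i1 i2).
Proof.
move=> t_ge0 [en1 ge1] [en2 ge2]; split=> [|b]; last first.
  by rewrite /midpoint; have := ge1 b; have := ge2 b; lra.
apply: le_trans (_ : (acs_energy i1 t + acs_energy i2 t) / 2 <= E); last by lra.
rewrite /acs_energy -big_split /= mulr_suml; apply: ler_sum => b _.
rewrite -subr_ge0 /midpoint (_ : _ - _ = (i1 b - i2 b) ^+ 2 / 4 * t b); last by field.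
by rewrite mulr_ge0 ?divr_ge0 ?sqr_ge0.
Qed.

Lemma optimal_t_unique {E i t1 t2} : (forall b, i b != 1) ->
  optimal_t E i t1 -> optimal_t E i t2 -> t1 = t2.
Proof.
move=> i_neq1 [ft1 t1_min] [ft2 t2_min].
have fm := feasible_t_midpoint ft1 ft2.
have mid_prod b : (i b - 1) * midpoint t1 t2 b = ((i b - 1) * t1 b + (i b - 1) * t2 b) / 2.
  by rewrite /midpoint; field.
have /forallP eq_prod := leif_cond_of_ge (acs_obj_midpoint_leif mid_prod)
  (lerD (t1_min _ fm) (t2_min _ fm)).
apply/funext => b; apply/eqP; move: (eq_prod b).
by rewrite (inj_eq (mulfI _)) // subr_eq0 i_neq1.
Qed.

Lemma optimal_i_unique {E eps t i1 i2} : (forall b, 0 <= t b) -> (forall b, t b != 0) ->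
  optimal_i E eps t i1 -> optimal_i E eps t i2 -> i1 = i2.
Proof.
move=> t_ge0 t_neq0 [fi1 i1_min] [fi2 i2_min].
have fm := feasible_i_midpoint t_ge0 fi1 fi2.
have mid_prod b : (midpoint i1 i2 b - 1) * t b = ((i1 b - 1) * t b + (i2 b - 1) * t b) / 2.
  by rewrite /midpoint; field.
have /forallP eq_prod := leif_cond_of_ge (acs_obj_midpoint_leif mid_prod)
  (lerD (i1_min _ fm) (i2_min _ fm)).
apply/funext => b; apply/eqP; move: (eq_prod b).
by rewrite (inj_eq (mulIf _)) // (inj_eq (addIr _)).
Qed.

(* The substitution [t' = (i' - 1) t] sends any [i'] feasible for [t] to a [t']
   feasible for [i = 2] with the same objective, because [4 (i' - 1) <= i'^2]. *)
Lemma optimal_i_two_of_optimal_t {E eps t i} : (forall b, i b = 2) ->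
  0 <= eps -> eps <= 1 -> optimal_t E i t -> optimal_i E eps t i.
Proof.
move=> i_two eps_ge0 eps_le1 [[en t_ge0] t_min]; split.
  by split=> // b; rewrite i_two; lra.
move=> i' [en' i'_ge].
pose t' b := (i' b - 1) * t b.
have ft' : feasible_t E i t'.
  split=> [|b]; last by rewrite mulr_ge0 // subr_ge0 (le_trans _ (i'_ge b)) // lerDl.
  apply: le_trans en'; apply: ler_sum => b _; rewrite /t' i_two -subr_ge0.
  rewrite (_ : i' b ^+ 2 * t b - _ = (i' b - 2) ^+ 2 * t b); last ring.
  exact: mulr_ge0 (sqr_ge0 _) (t_ge0 b).
have <- : acs_obj i t' = acs_obj i' t.
  by apply: eq_bigr => b _; rewrite /t' i_two; congr (_ * expR _); ring.
exact: t_min.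
Qed.

Lemma acs_run_stationary {E eps} {ii tt : nat -> 'I_B -> R} : 0 < eps ->
  acs_run E eps ii tt -> (forall b, tt 1%N b != 0) ->
  optimal_i E eps (tt 1%N) (ii 0%N) -> forall k, ii k = ii 0%N /\ tt k.+1 = tt 1%N.
Proof.
move=> eps_gt0 run tt1_neq0 ii0_opt.
have tt1_ge0 := (run 0%N).1.1.2.
have ii0_neq1 b : ii 0%N b != 1.
  by rewrite gt_eqF // (lt_le_trans _ (ii0_opt.1.2 b)) // ltrDl.
elim=> [|k [iik ttk]] //.
have iik1 : ii k.+1 = ii 0%N.
  by apply: (optimal_i_unique tt1_ge0 tt1_neq0 _ ii0_opt); rewrite -ttk; exact: (run k).2.
split=> //; apply: (optimal_t_unique ii0_neq1 _ (run 0%N).1).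
by rewrite -iik1; exact: (run k.+1).1.
Qed.

End AlternateConvexSearch.

Theorem corollary1 (R : realType) (B : nat) (E eps : R)
    (ii tt : nat -> 'I_B -> R) :
  (1 <= B)%N -> 0 < E -> 0 < eps -> eps <= 1 ->
  (forall b : 'I_B, ii 0%N b = 2) ->
  acs_run E eps ii tt ->
  (forall b : 'I_B, tt 1%N b != 0) ->
  forall b : 'I_B,
    ((fun k => ii k b) @ \oo --> ii 0%N b) /\ ((fun k => tt k b) @ \oo --> tt 1%N b).
Proof.
move=> _ _ eps_gt0 eps_le1 ii0_two run tt1_neq0 b.
have ii0_opt := optimal_i_two_of_optimal_t ii0_two (ltW eps_gt0) eps_le1 (run 0%N).1.
have stationary := acs_run_stationary eps_gt0 run tt1_neq0 ii0_opt.
split; apply: cvg_near_cst; exists 1%N => // -[|k] // _ /=.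
  by rewrite (stationary k.+1).1.
by rewrite (stationary k).2.
Qed.
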